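(* Let $F$, $H$, $X$, $\Omega$, $Q$ and the sequences generated by the IneIREG method be as described in the context, and suppose $H$ is $\mu$-strongly monotone for some $\mu>0$. Suppose $\eta_k\equiv\eta>0$; $\lambda_k\in[\underline\lambda,\overline\lambda]$ for all $k\ge0$ with $0<\underline\lambda\le\overline\lambda<1/L$, $L:=L_F+\eta L_H$; and $\alpha_0\in[0,1]$ and $\alpha_{k+1}\le(1-\beta_k)\alpha_k$ for all $k\ge0$, where $\beta_k:=\big(\frac{1}{1-\lambda_k^2L^2}+\frac{1}{2\lambda_k\eta\mu}\big)^{-1}$. Define $p_k:=\big(\prod_{i=0}^k(1-\beta_i)\big)^{-1}$ for $k\ge0$, for $k\ge1$ $\Lambda_k:=\sum_{j=0}^{k-1}\lambda_j\eta p_j$ and $\overline y_k:=\Lambda_k^{-1}\sum_{j=0}^{k-1}\lambda_j\eta p_jy_j$, and $\beta:=\big(\frac{1}{1-\overline\lambda^2L^2}+\frac{1}{2\underline\lambda\eta\mu}\big)^{-1}\in(0,1)$. Then for all $k\ge1$, $$-B_H\,\mathrm{dist}(\overline y_k,Q)\le\mathrm{Gap}(\overline y_k,H,Q)\le(k+1)(1-\beta)^k\Big(\frac{D_X^2}{\underline\lambda\eta}\Big).$$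
   Context: Work in $\mathbb{R}^n$ with Euclidean inner product $\langle\cdot,\cdot\rangle$ and norm $\|\cdot\|$. The maps $F\colon \mathrm{Dom}\,F\to\mathbb{R}^n$ and $H\colon\mathrm{Dom}\,H\to\mathbb{R}^n$ are monotone and Lipschitz continuous with constants $L_F>0$ and $L_H>0$; $H$ is $\mu$-strongly monotone means $\langle H(x)-H(y),x-y\rangle\ge\mu\|x-y\|^2$ for all $x,y\in\mathrm{Dom}\,H$. $X$ is a nonempty compact convex set and $\Omega$ a nonempty closed convex set with $X\subset\Omega\subset\mathrm{Dom}\,F\cap\mathrm{Dom}\,H$; $P_X,P_\Omega$ denote orthogonal projections. $Q:=\{x\in X:\langle F(x),y-x\rangle\ge0\ \forall y\in X\}$ is assumed nonempty. $D_X:=\sup_{x,y\in X}\|x-y\|$, $B_H:=\sup_{x\in Q}\|H(x)\|$, $\mathrm{dist}(y,Q)$ is the Euclidean distance to $Q$. $\mathrm{Gap}(z,H,Q):=\sup_{x\in Q}\langle H(x),z-x\rangle$. IneIREG method: start with $x_0=x_{-1}\in X$; for $k=0,1,\dots$, with parameters $\alpha_k\ge0$, $\lambda_k>0$, $\eta_k>0$, set $w_k=x_k+\alpha_k(x_k-x_{k-1})$, $w'_k=P_\Omega(w_k)$, $y_k=P_X\big(w_k-\lambda_k(F(w'_k)+\eta_kH(w'_k))\big)$, $x_{k+1}=P_X\big(w_k-\lambda_k(F(y_k)+\eta_kH(y_k))\big)$. *)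

From HB Require Import structures.
From mathcomp Require Import all_boot all_order all_algebra.
From mathcomp Require Import all_classical all_reals all_analysis.
Set Implicit Arguments. Unset Strict Implicit. Unset Printing Implicit Defensive.
Import Order.TTheory GRing.Theory Num.Theory.
Import numFieldNormedType.Exports.
Local Open Scope classical_set_scope.
Local Open Scope ring_scope.

Section Defs.
Variables (R : realType) (n : nat).
Notation vec := 'rV[R]_n.

Definition dot (u v : vec) : R := \sum_(i < n) u ord0 i * v ord0 i.
Definition enorm (u : vec) : R := Num.sqrt (dot u u).

Definition vi_convex (A : set vec) : Prop :=
  forall x y (t : R), A x -> A y -> 0 <= t <= 1 -> A ((1 - t) *: x + t *: y).

Definition vi_monotone (D : set vec) (G : vec -> vec) : Prop :=
  forall x y, D x -> D y -> 0 <= dot (G x - G y) (x - y).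

Definition vi_strongly_monotone (D : set vec) (G : vec -> vec) (mu : R) : Prop :=
  forall x y, D x -> D y -> mu * enorm (x - y) ^+ 2 <= dot (G x - G y) (x - y).

Definition vi_lipschitz (D : set vec) (G : vec -> vec) (L : R) : Prop :=
  forall x y, D x -> D y -> enorm (G x - G y) <= L * enorm (x - y).

Definition is_proj (A : set vec) (P : vec -> vec) : Prop :=
  forall z, A (P z) /\ forall y, A y -> enorm (z - P z) <= enorm (z - y).

(* compactness / closedness for the standard (product = Euclidean) topology *)
Definition vcompact (A : set vec) : Prop := compact A.
Definition vclosed (A : set vec) : Prop := closed A.

Definition VIsol (F : vec -> vec) (X : set vec) : set vec :=
  [set x | X x /\ forall y, X y -> 0 <= dot (F x) (y - x)].

Definition vi_diam (X : set vec) : R := sup [set enorm (x - y) | x in X & y in X].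
Definition supnorm_on (H : vec -> vec) (Q : set vec) : R :=
  sup [set enorm (H x) | x in Q].
Definition vi_dist (y : vec) (Q : set vec) : R := inf [set enorm (y - q) | q in Q].
Definition Gap (z : vec) (H : vec -> vec) (Q : set vec) : R :=
  sup [set dot (H x) (z - x) | x in Q].

Definition betac (lam lam' L eta mu : R) : R :=
  ((1 - lam ^+ 2 * L ^+ 2)^-1 + (2 * lam' * eta * mu)^-1)^-1.

End Defs.

From HB Require Import structures.
From mathcomp Require Import all_boot all_order all_algebra.
From mathcomp Require Import all_classical all_reals all_analysis.
From mathcomp Require Import ring lra.
Set Implicit Arguments. Unset Strict Implicit. Unset Printing Implicit Defensive.
Import Order.TTheory GRing.Theory Num.Theory.
Import numFieldNormedType.Exports.
Local Open Scope classical_set_scope.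
Local Open Scope ring_scope.

(* Write G := F + eta H, which is (L_F + eta L_H)-Lipschitz.  Each IneIREG step is an
   extragradient step for G from the extrapolated point w_k; the two projections, the
   monotonicity of F at a solution x* of VI(F, X) and the strong monotonicity of H give
     |x_{k+1} - x*|^2 <= (1 - beta_k) |w_k - x*|^2 - 2 lam_k eta <H x*, y_k - x*>,
   where beta_k comes from splitting |w_k - x*|^2 <= (|w_k - y_k| + |y_k - x*|)^2 between
   the decrease terms (1 - lam_k^2 L^2) |w_k - y_k|^2 and 2 lam_k eta mu |y_k - x*|^2.
   Multiplying by p_k, the Lyapunov function p_{k-1} (|x_k - x*|^2 - alpha_k |x_{k-1} - x*|^2)
   telescopes because p_k alpha_{k+1} <= p_{k-1} alpha_k, and all inertial errors are
   O(D_X^2); hence sum_{j<k} lam_j eta p_j <H x*, y_j - x*> <= (k+1) D_X^2.  Dividing by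
   Lambda_k >= lamlo eta p_{k-1} >= lamlo eta (1 - beta)^-k bounds <H x*, ybar_k - x*>, and
   the supremum over x* in Q is the upper bound.  The lower bound is Cauchy-Schwarz
   against the points of Q. *)

Section InnerProduct.
Variables (R : realType) (n : nat).
Implicit Types (u v w z : 'rV[R]_n) (a c : R).

Lemma dotC u v : dot u v = dot v u.
Proof. by apply: eq_bigr => i _; rewrite mulrC. Qed.

Lemma dotDl u v w : dot (u + v) w = dot u w + dot v w.
Proof. by rewrite /dot -big_split; apply: eq_bigr => i _; rewrite mxE mulrDl. Qed.

Lemma dotZl a u v : dot (a *: u) v = a * dot u v.
Proof. by rewrite /dot mulr_sumr; apply: eq_bigr => i _; rewrite mxE mulrA. Qed.

Lemma dotNl u v : dot (- u) v = - dot u v.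
Proof. by rewrite -scaleN1r dotZl mulN1r. Qed.

Lemma dotBl u v w : dot (u - v) w = dot u w - dot v w.
Proof. by rewrite dotDl dotNl. Qed.

Lemma dotDr u v w : dot w (u + v) = dot w u + dot w v.
Proof. by rewrite dotC dotDl !(dotC w). Qed.

Lemma dotZr a u v : dot v (a *: u) = a * dot v u.
Proof. by rewrite dotC dotZl dotC. Qed.

Lemma dotNr u v : dot v (- u) = - dot v u.
Proof. by rewrite dotC dotNl dotC. Qed.

Lemma dotBr u v w : dot w (u - v) = dot w u - dot w v.
Proof. by rewrite dotDr dotNr. Qed.

Lemma dot0l u : dot 0 u = 0.
Proof. by rewrite /dot big1 // => i _; rewrite mxE mul0r. Qed.

Lemma dot0r u : dot u 0 = 0.
Proof. by rewrite dotC dot0l. Qed.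

Lemma dot_sumr (I : Type) (r : seq I) (P : pred I) (f : I -> 'rV[R]_n) u :
  dot u (\sum_(i <- r | P i) f i) = \sum_(i <- r | P i) dot u (f i).
Proof. exact: (big_morph _ (fun v w => dotDr v w u) (dot0r u)). Qed.

Lemma dot_ge0 u : 0 <= dot u u.
Proof. by apply: sumr_ge0 => i _; rewrite -expr2 sqr_ge0. Qed.

Lemma dot_eq0 u : dot u u = 0 -> u = 0.
Proof.
move=> u0; apply/rowP => i; rewrite [RHS]mxE.
have sq_ge0 j : true -> 0 <= u ord0 j * u ord0 j by rewrite -expr2 sqr_ge0.
by have /eqP := @psumr_eq0P _ _ _ _ sq_ge0 u0 i isT; rewrite -expr2 sqrf_eq0 => /eqP.
Qed.

Lemma enorm_ge0 u : 0 <= enorm u.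
Proof. exact: sqrtr_ge0. Qed.

Lemma enorm_sq u : enorm u ^+ 2 = dot u u.
Proof. by rewrite /enorm sqr_sqrtr // dot_ge0. Qed.

Lemma ler_enorm u v : (enorm u <= enorm v) = (dot u u <= dot v v).
Proof. by rewrite /enorm ler_sqrt // dot_ge0. Qed.

Lemma enorm_le u c : 0 <= c -> dot u u <= c ^+ 2 -> enorm u <= c.
Proof. by move=> c0 uc; rewrite -(ger0_norm c0) -sqrtr_sqr ler_sqrt // sqr_ge0. Qed.

Lemma enormN u : enorm (- u) = enorm u.
Proof. by rewrite /enorm dotNl dotNr opprK. Qed.

Lemma enormZ a u : enorm (a *: u) = `|a| * enorm u.
Proof. by rewrite /enorm dotZl dotZr mulrA -expr2 sqrtrM ?sqr_ge0 // sqrtr_sqr. Qed.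

Lemma cauchy_schwarz u v : dot u v <= enorm u * enorm v.
Proof.
have [->|u0] := eqVneq u 0; first by rewrite dot0l /enorm dot0l sqrtr0 mul0r.
have uu_gt0 : 0 < dot u u.
  by rewrite lt_neqAle dot_ge0 andbT eq_sym; apply: contra_neq u0; apply: dot_eq0.
set A := dot u u; set B := dot u v; set C := dot v v.
(* the discriminant of the nonnegative quadratic t |-> |t u - v|^2, at t = B / A *)
have disc : B ^+ 2 <= A * C.
  have := dot_ge0 ((B / A) *: u - v).
  rewrite !(dotBl, dotBr, dotZl, dotZr) -/A -/B -/C (dotC v u) -/B.
  have -> : B / A * (B / A * A - B) - (B / A * B - C) = C - B ^+ 2 / A.
    by field; rewrite gt_eqF.
  rewrite subr_ge0 ler_pdivrMr //; nra.
have : B ^+ 2 <= (enorm u * enorm v) ^+ 2 by rewrite exprMn !enorm_sq.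
have := mulr_ge0 (enorm_ge0 u) (enorm_ge0 v).
move: (enorm u * enorm v) => p; nra.
Qed.

Lemma oppr_dot_le u v : - dot u v <= enorm u * enorm v.
Proof. by rewrite -dotNl -(enormN u) cauchy_schwarz. Qed.

Lemma enormD_le u v : enorm (u + v) <= enorm u + enorm v.
Proof.
apply: enorm_le; first by rewrite addr_ge0 ?enorm_ge0.
rewrite dotDl !dotDr (dotC v u) sqrrD !enorm_sq.
have := cauchy_schwarz u v; lra.
Qed.

Lemma dot_extrapolate a u v :
  dot (u + a *: (u - v)) (u + a *: (u - v)) =
  (1 + a) * dot u u - a * dot v v + a * (1 + a) * dot (u - v) (u - v).
Proof. by rewrite !(dotBl, dotBr, dotDl, dotDr, dotZl, dotZr) (dotC v u); ring. Qed.

Lemma dot_weighted_mean (c : nat -> R) (y : nat -> 'rV[R]_n) u z k :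
  \sum_(j < k) c j != 0 ->
  dot u ((\sum_(j < k) c j)^-1 *: \sum_(j < k) c j *: y j - z) =
  (\sum_(j < k) c j)^-1 * \sum_(j < k) c j * dot u (y j - z).
Proof.
move=> sum_neq0; set S := \sum_(j < k) c j.
have -> : S^-1 *: \sum_(j < k) c j *: y j - z = S^-1 *: \sum_(j < k) c j *: (y j - z).
  rewrite -[in LHS](scale1r z) -(mulVf sum_neq0) -scalerA -scalerBr.
  by rewrite scaler_suml -sumrB; congr (_ *: _); apply: eq_bigr => j _; rewrite scalerBr.
by rewrite dotZr dot_sumr; congr (_ * _); apply: eq_bigr => j _; rewrite dotZr.
Qed.

End InnerProduct.

Section BoundedSets.
Variables (R : realType) (n : nat).
Implicit Types (A : set 'rV[R]_n) (u v : 'rV[R]_n).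

Lemma compact_enorm_bounded A : compact A -> exists K, forall v, A v -> enorm v <= K.
Proof.
move=> /compact_bounded [M [_ AM]].
set M' := `|M| + 1.
have M'_ge0 : 0 <= M' by rewrite addr_ge0.
have {}AM v : A v -> `|v| <= M' by apply: AM; rewrite /M' ltr_pwDr // ler_norm.
exists (1 + n%:R * M' ^+ 2) => v Av.
have bnd_ge0 : 0 <= n%:R * M' ^+ 2 by rewrite mulr_ge0 ?sqr_ge0.
apply: enorm_le; first lra.
(* the normed-module norm on matrices is the sup-norm, not [enorm] *)
have : dot v v <= n%:R * M' ^+ 2.
  have -> : n%:R * M' ^+ 2 = \sum_(i < n) M' ^+ 2 by rewrite sumr_const card_ord mulr_natl.
  apply: ler_sum => i _.
  have vi_le : `|v ord0 i| <= M'.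
    apply: le_trans (AM _ Av); rewrite [leRHS]mx_normrE.
    exact: (le_bigmax _ (fun ij : 'I_1 * 'I_n => `|v ij.1 ij.2|) (ord0, i)).
  rewrite -expr2 -real_normK ?num_real //.
  by rewrite lerXn2r ?nnegrE ?normr_ge0.
move: (n%:R * M' ^+ 2) bnd_ge0 => b; nra.
Qed.

Lemma enorm_sub_le_diam A u v : compact A -> A u -> A v -> enorm (u - v) <= vi_diam A.
Proof.
move=> /compact_enorm_bounded[K AK] Au Av; apply: ub_le_sup; last by exists u => //; exists v.
exists (K + K) => _ [u' Au' [v' Av' <-]].
by apply: le_trans (enormD_le _ _) _; rewrite enormN lerD ?AK.
Qed.

Lemma dist_sq_le_diam A u v : compact A -> A u -> A v -> dot (u - v) (u - v) <= vi_diam A ^+ 2.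
Proof.
move=> cA Au Av; rewrite -enorm_sq lerXn2r ?nnegrE ?enorm_ge0 ?enorm_sub_le_diam //.
exact: le_trans (enorm_ge0 _) (enorm_sub_le_diam cA Au Av).
Qed.

End BoundedSets.

Section Projection.
Variables (R : realType) (n : nat) (A : set 'rV[R]_n) (P : 'rV[R]_n -> 'rV[R]_n).
Hypotheses (convA : vi_convex A) (projA : is_proj A P).

Lemma proj_obtuse z y : A y -> dot (z - P z) (y - P z) <= 0.
Proof.
move=> Ay; have [APz Pz_min] := projA z.
set e := z - P z; set v := y - P z.
have segment t : z - ((1 - t) *: P z + t *: y) = e - t *: v.
  by apply/rowP => i; rewrite !mxE; ring.
have {}Pz_min u : A u -> enorm e <= enorm (z - u) by exact: Pz_min.
clearbody e v; rewrite leNgt; apply/negP => ev_gt0.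
have vv_ge0 := dot_ge0 v.
(* moving from P z towards y by this step would strictly decrease the distance to z *)
set t := dot e v / (dot e v + dot v v).
have den_gt0 : 0 < dot e v + dot v v by lra.
have t_gt0 : 0 < t by rewrite divr_gt0.
have t01 : 0 <= t <= 1 by rewrite ltW //= ler_pdivrMr // mul1r; lra.
have := Pz_min _ (convA APz Ay t01).
rewrite segment ler_enorm !(dotBl, dotBr, dotZl, dotZr) (dotC v e) => min_t.
have : t * dot v v * (dot e v + dot v v) = dot e v * dot v v.
  by rewrite /t; field; rewrite gt_eqF.
have : 2 * dot e v <= t * dot v v.
  have : t * (2 * dot e v - t * dot v v) <= 0 by lra.
  nra.
nra.
Qed.

Lemma proj_dist_le z y : A y -> dot (P z - y) (P z - y) <= dot (z - y) (z - y).
Proof.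
move=> Ay; have := proj_obtuse z Ay.
have -> : z - y = (z - P z) - (y - P z) by apply/rowP => i; rewrite !mxE; ring.
have -> : P z - y = - (y - P z) by apply/rowP => i; rewrite !mxE; ring.
move: (z - P z) (y - P z) => e v.
rewrite !(dotBl, dotBr, dotNl, dotNr) (dotC v e) opprK.
have := dot_ge0 e; lra.
Qed.

End Projection.

Section Coefficients.
Variable R : realType.
Implicit Types a b s t lam L eta mu : R.

Lemma inv_add_inv_in01 a b : 0 < a <= 1 -> 0 < b -> 0 < (a^-1 + b^-1)^-1 < 1.
Proof.
move=> /andP[a_gt0 a_le1] b_gt0.
have ia_ge1 : 1 <= a^-1 by rewrite -invr1 lef_pV2 ?posrE.
have ib_gt0 : 0 < b^-1 by rewrite invr_gt0.
by rewrite invr_gt0 invf_lt1; lra.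
Qed.

Lemma inv_add_inv_le a b a' b' : 0 < a -> 0 < b -> a <= a' -> b <= b' ->
  (a^-1 + b^-1)^-1 <= (a'^-1 + b'^-1)^-1.
Proof.
move=> a_gt0 b_gt0 aa' bb'.
have ia_le : a'^-1 <= a^-1 by rewrite lef_pV2 ?posrE //; lra.
have ib_le : b'^-1 <= b^-1 by rewrite lef_pV2 ?posrE //; lra.
have ia'_gt0 : 0 < a'^-1 by rewrite invr_gt0; lra.
have ib'_gt0 : 0 < b'^-1 by rewrite invr_gt0; lra.
by rewrite lef_pV2 ?posrE; lra.
Qed.

Lemma inv_add_inv_sqrD_le a b s t : 0 < a -> 0 < b ->
  (a^-1 + b^-1)^-1 * (s + t) ^+ 2 <= a * s ^+ 2 + b * t ^+ 2.
Proof.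
move=> a_gt0 b_gt0.
rewrite mulrC -ler_pdivlMr ?invr_gt0 ?addr_gt0 ?invr_gt0 // invrK -subr_ge0.
have -> : (a * s ^+ 2 + b * t ^+ 2) * (a^-1 + b^-1) - (s + t) ^+ 2 =
          (a * s - b * t) ^+ 2 / (a * b) by field; rewrite !gt_eqF.
by rewrite divr_ge0 ?sqr_ge0 // mulr_ge0 ?ltW.
Qed.

Lemma betac_in01 lam (lam' : R) L eta mu : 0 <= lam * L < 1 -> 0 < lam' -> 0 < eta -> 0 < mu ->
  0 < betac lam lam' L eta mu < 1.
Proof.
move=> /andP[lamL_ge0 lamL_lt1] lam'_gt0 eta_gt0 mu_gt0.
apply: inv_add_inv_in01; last by rewrite !mulr_gt0.
by rewrite -exprMn subr_gt0 gerBl sqr_ge0 andbT expr_lt1.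
Qed.

Lemma betac_le (lam1 lam2 lam1' lam2' : R) L eta mu :
  0 <= lam1 * L -> lam1 * L <= lam2 * L -> lam2 * L < 1 ->
  0 < lam1' -> lam1' <= lam2' -> 0 < eta -> 0 < mu ->
  betac lam2 lam1' L eta mu <= betac lam1 lam2' L eta mu.
Proof.
move=> lam1L_ge0 lamL_le lam2L_lt1 lam1'_gt0 lam'_le eta_gt0 mu_gt0.
apply: inv_add_inv_le; last by rewrite -!mulrA ler_pM2l // ler_pM2r // mulr_gt0.
- by rewrite -exprMn subr_gt0 expr_lt1 //; lra.
- by rewrite !mulr_gt0.
- by rewrite lerD2l lerN2 -!exprMn lerXn2r ?nnegrE //; lra.
Qed.

End Coefficients.

Section Extragradient.
Variables (R : realType) (n : nat).
Implicit Types (u v w y z g : 'rV[R]_n) (lam L : R).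

Lemma extragradient_dist_le lam L w gu gy y xp xs :
  0 <= lam ->
  dot (w - lam *: gu - y) (xp - y) <= 0 ->
  dot (w - lam *: gy - xp) (xs - xp) <= 0 ->
  dot (gu - gy) (gu - gy) <= L ^+ 2 * dot (w - y) (w - y) ->
  dot (xp - xs) (xp - xs) <=
    dot (w - xs) (w - xs) - (1 - lam ^+ 2 * L ^+ 2) * dot (w - y) (w - y)
    - 2 * lam * dot gy (y - xs).
Proof.
move=> lam_ge0.
have -> : w - lam *: gu - y = (w - y) - lam *: gy - lam *: (gu - gy).
  by apply/rowP => i; rewrite !mxE; ring.
have -> : w - lam *: gy - xp = (w - y) - (xp - y) - lam *: gy.
  by apply/rowP => i; rewrite !mxE; ring.
have -> : xs - xp = - (xp - y) - (y - xs) by apply/rowP => i; rewrite !mxE; ring.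
have -> : xp - xs = (xp - y) + (y - xs) by apply/rowP => i; rewrite !mxE; ring.
have -> : w - xs = (w - y) + (y - xs) by apply/rowP => i; rewrite !mxE; ring.
have := dot_ge0 (lam *: (gu - gy) - (xp - y)).
move: (w - y) (xp - y) (y - xs) gy (gu - gy) => a b c g d.
rewrite !(dotBl, dotBr, dotDl, dotDr, dotNl, dotNr, dotZl, dotZr).
rewrite (dotC b d) (dotC c b) (dotC c a).
move=> sq_ge0 vi_y vi_xp lip.
have : lam ^+ 2 * dot d d <= lam ^+ 2 * (L ^+ 2 * dot a a).
  by rewrite ler_wpM2l ?sqr_ge0.
nra.
Qed.

End Extragradient.

Section IneIREGStep.
Variables (R : realType) (n : nat) (F H : 'rV[R]_n -> 'rV[R]_n).
Variables (DomF DomH X Omega : set 'rV[R]_n) (PX POm : 'rV[R]_n -> 'rV[R]_n).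
Variables (LF LH mu eta : R).
Hypotheses (mu_gt0 : 0 < mu) (eta_gt0 : 0 < eta).
Hypotheses (monF : vi_monotone DomF F) (lipF : vi_lipschitz DomF F LF).
Hypotheses (lipH : vi_lipschitz DomH H LH) (smH : vi_strongly_monotone DomH H mu).
Hypotheses (convX : vi_convex X) (convOm : vi_convex Omega).
Hypotheses (XOm : X `<=` Omega) (OmD : Omega `<=` DomF `&` DomH).
Hypotheses (projX : is_proj X PX) (projOm : is_proj Omega POm).

Let G v := F v + eta *: H v.

Lemma regularized_lipschitz u v : Omega u -> Omega v ->
  enorm (G u - G v) <= (LF + eta * LH) * enorm (u - v).
Proof.
move=> /OmD[DFu DHu] /OmD[DFv DHv].
have -> : G u - G v = (F u - F v) + eta *: (H u - H v) by apply/rowP => i; rewrite !mxE; ring.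
apply: le_trans (enormD_le _ _) _; rewrite enormZ gtr0_norm // mulrDl -mulrA.
by rewrite lerD ?lipF // ler_pM2l ?lipH.
Qed.

Lemma regularized_solution_ge xs v : VIsol F X xs -> X v ->
  eta * (mu * enorm (v - xs) ^+ 2 + dot (H xs) (v - xs)) <= dot (G v) (v - xs).
Proof.
move=> [Xxs solxs] Xv.
have [DFv DHv] := OmD (XOm Xv); have [DFxs DHxs] := OmD (XOm Xxs).
have F_ge0 : 0 <= dot (F v) (v - xs).
  by have := monF DFv DFxs; have := solxs _ Xv; rewrite dotBl; lra.
have : mu * enorm (v - xs) ^+ 2 + dot (H xs) (v - xs) <= dot (H v) (v - xs).
  by have := smH DHv DHxs; rewrite dotBl; lra.
rewrite /G dotDl dotZl -(ler_pM2l eta_gt0); lra.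
Qed.

Lemma ineireg_step lam w y xp xs :
  0 < lam -> 0 <= lam * (LF + eta * LH) < 1 ->
  y = PX (w - lam *: G (POm w)) -> xp = PX (w - lam *: G y) -> VIsol F X xs ->
  dot (xp - xs) (xp - xs) <=
    (1 - betac lam lam (LF + eta * LH) eta mu) * dot (w - xs) (w - xs)
    - 2 * lam * eta * dot (H xs) (y - xs).
Proof.
set L := LF + eta * LH.
move=> lam_gt0 lamL01 y_def xp_def Qxs.
have L_ge0 : 0 <= L by rewrite -(pmulr_rge0 _ lam_gt0); case/andP: lamL01.
have Xy : X y by rewrite y_def; exact: (projX _).1.
have Xxp : X xp by rewrite xp_def; exact: (projX _).1.
have Om_w' : Omega (POm w) := (projOm w).1.
have G_lip : dot (G (POm w) - G y) (G (POm w) - G y) <= L ^+ 2 * dot (w - y) (w - y).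
  rewrite -!enorm_sq -exprMn lerXn2r ?nnegrE ?mulr_ge0 ?enorm_ge0 //.
  apply: le_trans (regularized_lipschitz Om_w' (XOm Xy)) _.
  rewrite ler_wpM2l // ler_enorm; exact: (proj_dist_le convOm projOm _ (XOm Xy)).
have := proj_obtuse convX projX (w - lam *: G (POm w)) Xxp; rewrite -y_def => vi_y.
have := proj_obtuse convX projX (w - lam *: G y) Qxs.1; rewrite -xp_def => vi_xp.
have := extragradient_dist_le (ltW lam_gt0) vi_y vi_xp G_lip.
have := regularized_solution_ge Qxs Xy.
have := enormD_le (w - y) (y - xs).
have -> : w - y + (y - xs) = w - xs by apply/rowP => i; rewrite !mxE; ring.
rewrite -(enorm_sq (w - y)) -(enorm_sq (w - xs)).
set s := enorm (w - y); set t := enorm (y - xs); set W := enorm (w - xs).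
set a := 1 - lam ^+ 2 * L ^+ 2; set b := 2 * lam * eta * mu.
have a01 : 0 < a <= 1.
  by rewrite /a -exprMn subr_gt0 gerBl sqr_ge0 andbT expr_lt1 //; case/andP: lamL01.
have b_gt0 : 0 < b by rewrite !mulr_gt0.
have := inv_add_inv_sqrD_le s t (andP a01).1 b_gt0.
have /andP[beta_gt0 _] := inv_add_inv_in01 a01 b_gt0.
rewrite [betac _ _ _ _ _]/(betac _ _ _ _ _) -/a -/b.
move: (a^-1 + b^-1)^-1 beta_gt0 => beta beta_gt0 split_sq W_le mono eg.
have : W ^+ 2 <= (s + t) ^+ 2 by rewrite lerXn2r ?nnegrE ?addr_ge0 ?enorm_ge0.
have : 2 * lam * (eta * (mu * t ^+ 2 + dot (H xs) (y - xs))) <= 2 * lam * dot (G y) (y - xs).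
  by rewrite ler_pM2l ?mulr_gt0.
rewrite /b in split_sq; nra.
Qed.

End IneIREGStep.

Section InertialLyapunov.
Variables (R : realType) (q alpha d dm m g : nat -> R) (D2 : R).
Hypotheses (q_gt0 : forall j, 0 < q j) (q0 : q 0%N = 1).
Hypotheses (alpha_ge0 : forall j, 0 <= alpha j) (alpha_le1 : forall j, alpha j <= 1).
Hypothesis qalpha_noninc : forall j, q j.+1 * alpha j.+1 <= q j * alpha j.
Hypotheses (d_ge0 : forall j, 0 <= d j) (d_le : forall j, d j <= D2).
Hypotheses (dm_ge0 : forall j, 0 <= dm j) (dm_le : forall j, dm j <= D2).
Hypothesis dmS : forall j, dm j.+1 = d j.
Hypothesis m_le : forall j, m j <= D2.
Hypothesis step : forall j, q j.+1 * d j.+1 + 2 * g j <=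
  q j * ((1 + alpha j) * d j - alpha j * dm j + alpha j * (1 + alpha j) * m j).

Let a j := q j * alpha j.
Let Phi j := q j * d j - a j * dm j.

Let a_ge0 j : 0 <= a j.
Proof. exact: mulr_ge0 (ltW (q_gt0 j)) (alpha_ge0 j). Qed.

Let a_le1 j : a j <= 1.
Proof.
elim: j => [|j ih]; first by rewrite /a q0 mul1r.
exact: le_trans (qalpha_noninc j) ih.
Qed.

Let Phi_telescope N :
  2 * \sum_(j < N) g j + Phi N <= Phi 0%N + (a 0%N - a N) * D2 + 2 * N%:R * D2.
Proof.
elim: N => [|N ih]; first by rewrite big_ord0 subrr; lra.
rewrite big_ord_recr /= mulrDr /Phi dmS -[N.+1%:R]natr1.
have := step N; have := qalpha_noninc N.
have : (a N - a N.+1) * d N <= (a N - a N.+1) * D2.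
  by apply: ler_wpM2l; [rewrite subr_ge0; exact: qalpha_noninc | exact: d_le].
have : a N * (1 + alpha N) * m N <= 2 * D2.
  have c_le2 : a N * (1 + alpha N) <= 2.
    have := a_le1 N; have := alpha_ge0 N; have := alpha_le1 N.
    move: (a N) (alpha N) => aN alN *; nra.
  have c_ge0 : 0 <= a N * (1 + alpha N) by rewrite mulr_ge0 ?addr_ge0.
  apply: le_trans (ler_wpM2l c_ge0 (m_le N)) _.
  by rewrite ler_wpM2r // (le_trans (d_ge0 N) (d_le N)).
move: ih; rewrite /Phi /a; lra.
Qed.

Lemma inertial_lyapunov_sum N : \sum_(j < N) g j <= N.+1%:R * D2.
Proof.
have := Phi_telescope N; rewrite /Phi /a q0 !mul1r -natr1.
have := mulr_ge0 (ltW (q_gt0 N)) (d_ge0 N).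
have := ler_wpM2l (a_ge0 N) (dm_le N).
have := mulr_ge0 (alpha_ge0 0%N) (dm_ge0 0%N).
have := ler_wpM2r (le_trans (d_ge0 0%N) (d_le 0%N)) (alpha_le1 0%N).
have := d_le 0%N; rewrite /a; lra.
Qed.

End InertialLyapunov.

Section Gap.
Variables (R : realType) (n : nat) (H : 'rV[R]_n -> 'rV[R]_n) (Q : set 'rV[R]_n).
Hypothesis Q_neq0 : Q !=set0.

Lemma Gap_le z b : (forall v, Q v -> dot (H v) (z - v) <= b) -> Gap z H Q <= b.
Proof.
move=> le_b; have [v Qv] := Q_neq0.
by apply: ge_sup => [|_ [u Qu <-]]; [exists (dot (H v) (z - v)), v | exact: le_b].
Qed.

Lemma lipschitz_enorm_bounded (D : set 'rV[R]_n) LH K :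
  vi_lipschitz D H LH -> 0 <= LH -> Q `<=` D -> (forall v, Q v -> enorm v <= K) ->
  has_ubound [set enorm (H v) | v in Q].
Proof.
move=> lipH LH_ge0 QD QK; have [v0 Qv0] := Q_neq0.
exists (enorm (H v0) + LH * (K + K)) => _ [v Qv <-].
have -> : H v = H v0 + (H v - H v0) by apply/rowP => i; rewrite !mxE; ring.
apply: le_trans (enormD_le _ _) _; rewrite lerD2l.
apply: le_trans (lipH _ _ (QD _ Qv) (QD _ Qv0)) _; rewrite ler_wpM2l //.
by apply: le_trans (enormD_le _ _) _; rewrite enormN lerD ?QK.
Qed.

Lemma Gap_ge_dist z K : (forall v, Q v -> enorm v <= K) ->
  has_ubound [set enorm (H v) | v in Q] ->
  - supnorm_on H Q * vi_dist z Q <= Gap z H Q.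
Proof.
move=> QK H_bnd; have [v0 Qv0] := Q_neq0.
set B := supnorm_on H Q.
have HB v : Q v -> enorm (H v) <= B by move=> Qv; apply: ub_le_sup H_bnd _ _; exists v.
have B_ge0 : 0 <= B by apply: le_trans (HB _ Qv0); apply: enorm_ge0.
have Gap_ub v : Q v -> dot (H v) (z - v) <= Gap z H Q.
  move=> Qv; apply: ub_le_sup; last by exists v.
  exists (B * (enorm z + K)) => _ [u Qu <-].
  apply: le_trans (cauchy_schwarz _ _) _; apply: ler_pM; rewrite ?enorm_ge0 ?HB //.
  by apply: le_trans (enormD_le _ _) _; rewrite enormN lerD2l QK.
have Gap_lb v : Q v -> - (B * enorm (z - v)) <= Gap z H Q.
  move=> Qv; apply: le_trans (Gap_ub v Qv).
  have := oppr_dot_le (H v) (z - v).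
  have := ler_wpM2r (enorm_ge0 (z - v)) (HB v Qv); lra.
have [B0|B_neq0] := eqVneq B 0.
  by have := Gap_lb v0 Qv0; rewrite B0 !(mul0r, oppr0).
have B_gt0 : 0 < B by rewrite lt_neqAle eq_sym B_neq0.
have : - Gap z H Q / B <= vi_dist z Q.
  apply: lb_le_inf => [|_ [v Qv <-]]; first by exists (enorm (z - v0)), v0.
  by rewrite ler_pdivrMr //; have := Gap_lb v Qv; lra.
by rewrite ler_pdivrMr //; lra.
Qed.

End Gap.

Section IneIREG.
Variables (R : realType) (n : nat) (F H : 'rV[R]_n -> 'rV[R]_n).
Variables (DomF DomH X Omega : set 'rV[R]_n) (PX POm : 'rV[R]_n -> 'rV[R]_n).
Variables (LF LH mu eta lamlo lamhi : R) (lam alpha : nat -> R).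
Variables (x y w w' : nat -> 'rV[R]_n).
Hypotheses (LF_gt0 : 0 < LF) (LH_gt0 : 0 < LH) (mu_gt0 : 0 < mu) (eta_gt0 : 0 < eta).
Hypotheses (monF : vi_monotone DomF F) (lipF : vi_lipschitz DomF F LF).
Hypotheses (lipH : vi_lipschitz DomH H LH) (smH : vi_strongly_monotone DomH H mu).
Hypotheses (cX : vcompact X) (convX : vi_convex X) (convOm : vi_convex Omega).
Hypotheses (XOm : X `<=` Omega) (OmD : Omega `<=` DomF `&` DomH).
Hypotheses (projX : is_proj X PX) (projOm : is_proj Omega POm).
Hypotheses (lamlo_gt0 : 0 < lamlo) (lamlo_le : lamlo <= lamhi).
Hypothesis lamhi_lt : lamhi < (LF + eta * LH)^-1.
Hypothesis lam_in : forall k, lamlo <= lam k <= lamhi.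
Hypotheses (alpha_ge0 : forall k, 0 <= alpha k) (alpha0_le1 : alpha 0%N <= 1).
Hypothesis alphaS : forall k,
  alpha k.+1 <= (1 - betac (lam k) (lam k) (LF + eta * LH) eta mu) * alpha k.
Hypothesis Xx0 : X (x 0%N).
Hypothesis w_def : forall k,
  w k = x k + alpha k *: (x k - (if k is k'.+1 then x k' else x 0%N)).
Hypothesis w'_def : forall k, w' k = POm (w k).
Hypothesis y_def : forall k, y k = PX (w k - lam k *: (F (w' k) + eta *: H (w' k))).
Hypothesis x_def : forall k, x k.+1 = PX (w k - lam k *: (F (y k) + eta *: H (y k))).

Let L := LF + eta * LH.
(* [q k] is p_(k-1) of the paper, with [q 0 = 1]; thus [c j] is lam_j eta p_j. *)
Let beta_ k := betac (lam k) (lam k) L eta mu.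
Let beta := betac lamhi lamlo L eta mu.
Let q k := (\prod_(i < k) (1 - beta_ i))^-1.
Let c j := lam j * eta * q j.+1.
Let Lam k := \sum_(j < k) c j.
Let D := vi_diam X.

Let lamhiL_in01 : 0 <= lamhi * L < 1.
Proof.
have L_gt0 : 0 < L by rewrite addr_gt0 ?mulr_gt0.
have := lamhi_lt; rewrite -(ltr_pM2r L_gt0) mulVf ?gt_eqF // => ->.
by rewrite mulr_ge0 ?ltW // (lt_le_trans lamlo_gt0).
Qed.

Let lamL_in01 k : 0 <= lam k * L < 1.
Proof.
have /andP[lo hi] := lam_in k; have /andP[hiL0 hiL1] := lamhiL_in01.
have L_ge0 : 0 <= L by rewrite addr_ge0 ?mulr_ge0 ?ltW.
have lam_gt0 : 0 < lam k := lt_le_trans lamlo_gt0 lo.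
rewrite mulr_ge0 ?(ltW lam_gt0) //=; apply: le_lt_trans hiL1; exact: ler_wpM2r.
Qed.

Lemma ineireg_beta_in01 : 0 < beta < 1.
Proof. exact: betac_in01. Qed.

Let beta_k_in01 k : 0 < beta_ k < 1.
Proof. by apply: betac_in01 => //; have /andP[lo _] := lam_in k; apply: lt_le_trans lo. Qed.

Let beta_le k : beta <= beta_ k.
Proof.
have /andP[lo hi] := lam_in k; have /andP[lamL0 _] := lamL_in01 k.
have /andP[_ hiL1] := lamhiL_in01.
by apply: betac_le => //; rewrite ler_wpM2r // addr_ge0 ?mulr_ge0 ?ltW.
Qed.

Let q_gt0 k : 0 < q k.
Proof. by rewrite invr_gt0 prodr_gt0 // => i _; rewrite subr_gt0; case/andP: (beta_k_in01 i). Qed.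

Let q0 : q 0%N = 1.
Proof. by rewrite /q big_ord0 invr1. Qed.

Let qS k : q k.+1 * (1 - beta_ k) = q k.
Proof.
have : 1 - beta_ k != 0 by rewrite subr_eq0 gt_eqF //; case/andP: (beta_k_in01 k).
by rewrite /q big_ord_recr invfM -mulrA => /mulVf->; rewrite mulr1.
Qed.

Let q_expr_ge1 k : 1 <= q k * (1 - beta) ^+ k.
Proof.
have /andP[_ beta_lt1] := ineireg_beta_in01.
have -> : (1 - beta) ^+ k = \prod_(i < k) (1 - beta) by rewrite prodr_const card_ord.
rewrite -[leLHS](mulfV (lt0r_neq0 (q_gt0 k))) invrK.
apply: ler_wpM2l; first exact: ltW.
apply: ler_prod => i _; case/andP: (beta_k_in01 i) => _ bi_lt1.
by rewrite subr_ge0 ltW //= lerD2l lerN2 beta_le.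
Qed.

Let alpha_le1 k : alpha k <= 1.
Proof.
elim: k => [//|k ih]; apply: le_trans (alphaS k) _.
have /andP[b_gt0 b_lt1] := beta_k_in01 k.
apply: mulr_ile1 => //; first by rewrite subr_ge0 ltW.
by rewrite gerBl ltW.
Qed.

Let qalpha_noninc k : q k.+1 * alpha k.+1 <= q k * alpha k.
Proof. by rewrite -(qS k) -mulrA; apply: ler_wpM2l; [exact: ltW | exact: alphaS]. Qed.

Let x_in k : X (x k).
Proof. by case: k => [//|k]; rewrite x_def; exact: (projX _).1. Qed.

Let y_in k : X (y k).
Proof. by rewrite y_def; exact: (projX _).1. Qed.

Section Solution.
Variable xs : 'rV[R]_n.
Hypothesis Qxs : VIsol F X xs.

Let xm k := if k is k'.+1 then x k' else x 0%N.
Let d k := dot (x k - xs) (x k - xs).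
Let dm k := dot (xm k - xs) (xm k - xs).
Let m k := dot (x k - xm k) (x k - xm k).

Let lyapunov_step j : q j.+1 * d j.+1 + 2 * (c j * dot (H xs) (y j - xs)) <=
  q j * ((1 + alpha j) * d j - alpha j * dm j + alpha j * (1 + alpha j) * m j).
Proof.
have lam_gt0 : 0 < lam j by case/andP: (lam_in j) => lo _; apply: lt_le_trans lo.
have y_def' : y j = PX (w j - lam j *: (F (POm (w j)) + eta *: H (POm (w j)))).
  by rewrite y_def w'_def.
have := ineireg_step mu_gt0 eta_gt0 monF lipF lipH smH convX convOm XOm OmD projX projOm
  lam_gt0 (lamL_in01 j) y_def' (x_def j) Qxs.
have -> : w j - xs = (x j - xs) + alpha j *: ((x j - xs) - (xm j - xs)).
  by rewrite w_def; apply/rowP => i; rewrite !mxE; ring.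
rewrite dot_extrapolate.
have -> : (x j - xs) - (xm j - xs) = x j - xm j by apply/rowP => i; rewrite !mxE; ring.
rewrite -/(d j) -/(dm j) -/(m j) -/(d j.+1) -/(beta_ j) => step.
have := ler_wpM2l (ltW (q_gt0 j.+1)) step.
rewrite mulrBr (mulrA (q j.+1)) qS /c; lra.
Qed.

Lemma ineireg_weighted_sum_le k :
  \sum_(j < k) c j * dot (H xs) (y j - xs) <= k.+1%:R * D ^+ 2.
Proof.
have diam (u v : 'rV[R]_n) : X u -> X v -> dot (u - v) (u - v) <= D ^+ 2.
  exact: dist_sq_le_diam.
apply: (@inertial_lyapunov_sum _ q alpha d dm m (fun j => c j * dot (H xs) (y j - xs)))
  => //.
- by move=> j; apply: dot_ge0.
- by move=> j; apply: diam; [apply: x_in | apply: Qxs.1].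
- by move=> j; apply: dot_ge0.
- by move=> j; apply: diam; [case: j => *; apply: x_in | exact: Qxs.1].
- by move=> j; apply: diam; [apply: x_in | case: j => *; apply: x_in].
Qed.

End Solution.

Let Lam_ge k : (0 < k)%N -> lamlo * eta * q k <= Lam k.
Proof.
case: k => [//|k] _; rewrite /Lam big_ord_recr /=.
have c_ge0 j : 0 <= c j.
  have /andP[lo _] := lam_in j.
  exact: mulr_ge0 (mulr_ge0 (le_trans (ltW lamlo_gt0) lo) (ltW eta_gt0)) (ltW (q_gt0 _)).
rewrite -[leLHS]add0r lerD ?sumr_ge0 //.
apply: ler_wpM2r; first exact: ltW.
by apply: ler_wpM2r; [exact: ltW | case/andP: (lam_in k)].
Qed.

Lemma ineireg_dot_le xs k : VIsol F X xs -> (0 < k)%N ->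
  dot (H xs) ((Lam k)^-1 *: \sum_(j < k) c j *: y j - xs) <=
  k.+1%:R * (1 - beta) ^+ k * (D ^+ 2 / (lamlo * eta)).
Proof.
move=> Qxs k_gt0.
have lo_eta_gt0 : 0 < lamlo * eta by rewrite mulr_gt0.
have Lam_gt0 : 0 < Lam k by apply: lt_le_trans (Lam_ge k_gt0); rewrite mulr_gt0.
rewrite dot_weighted_mean ?gt_eqF //.
have -> : k.+1%:R * (1 - beta) ^+ k * (D ^+ 2 / (lamlo * eta)) =
          (1 - beta) ^+ k / (lamlo * eta) * (k.+1%:R * D ^+ 2) by ring.
apply: le_trans (ler_wpM2l _ (ineireg_weighted_sum_le Qxs k)) _; first by rewrite invr_ge0 ltW.
apply: ler_wpM2r; first by rewrite mulr_ge0 ?sqr_ge0.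
rewrite ler_pdivlMr // ler_pdivrMl //.
have beta_le1 : 0 <= 1 - beta by rewrite subr_ge0 ltW //; case/andP: ineireg_beta_in01.
apply: le_trans (ler_wpM2r (exprn_ge0 k beta_le1) (Lam_ge k_gt0)).
rewrite -(mulrA (lamlo * eta)) -[leLHS]mulr1.
by apply: ler_wpM2l; [exact: ltW | exact: q_expr_ge1].
Qed.

End IneIREG.

Theorem corollary4p14 (R : realType) (n : nat)
  (F H : 'rV[R]_n -> 'rV[R]_n) (DomF DomH X Omega : set 'rV[R]_n)
  (LF LH mu : R) (PX POm : 'rV[R]_n -> 'rV[R]_n)
  (eta lamlo lamhi : R) (lam alpha : nat -> R)
  (x y w w' : nat -> 'rV[R]_n) :
  0 < LF -> 0 < LH -> 0 < mu ->
  vi_monotone DomF F -> vi_lipschitz DomF F LF ->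
  vi_monotone DomH H -> vi_lipschitz DomH H LH ->
  vi_strongly_monotone DomH H mu ->
  X !=set0 -> vcompact X -> vi_convex X ->
  Omega !=set0 -> vclosed Omega -> vi_convex Omega ->
  X `<=` Omega -> Omega `<=` DomF `&` DomH ->
  is_proj X PX -> is_proj Omega POm ->
  VIsol F X !=set0 ->
  (* parameters *)
  0 < eta ->
  0 < lamlo -> lamlo <= lamhi -> lamhi < (LF + eta * LH)^-1 ->
  (forall k, lamlo <= lam k <= lamhi) ->
  (forall k, 0 <= alpha k) -> alpha 0%N <= 1 ->
  (forall k, alpha k.+1 <=
     (1 - betac (lam k) (lam k) (LF + eta * LH) eta mu) * alpha k) ->
  (* IneIREG iterates, with x_{-1} = x_0 *)
  X (x 0%N) ->
  (forall k, w k = x k + alpha k *: (x k - (if k is k'.+1 then x k' else x 0%N))) ->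
  (forall k, w' k = POm (w k)) ->
  (forall k, y k = PX (w k - lam k *: (F (w' k) + eta *: H (w' k)))) ->
  (forall k, x k.+1 = PX (w k - lam k *: (F (y k) + eta *: H (y k)))) ->
  let L := LF + eta * LH in
  let beta_ k := betac (lam k) (lam k) L eta mu in
  let p k := (\prod_(i < k.+1) (1 - beta_ i))^-1 in
  let Lam k := \sum_(j < k) lam j * eta * p j in
  let ybar k := (Lam k)^-1 *: \sum_(j < k) (lam j * eta * p j) *: y j in
  let beta := betac lamhi lamlo L eta mu in
  let Q := VIsol F X in
  (0 < beta < 1) /\
  forall k : nat, (1 <= k)%N ->
    - supnorm_on H Q * vi_dist (ybar k) Q <= Gap (ybar k) H Q /\
    Gap (ybar k) H Q <=
      k.+1%:R * (1 - beta) ^+ k * (vi_diam X ^+ 2 / (lamlo * eta)).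
Proof.
move=> LF_gt0 LH_gt0 mu_gt0 monF lipF _ lipH smH _ cX convX _ _ convOm XOm OmD
  projX projOm Q_neq0 eta_gt0 lamlo_gt0 lamlo_le lamhi_lt lam_in alpha_ge0 alpha0_le1
  alphaS Xx0 w_def w'_def y_def x_def L beta_ p Lam ybar beta Q.
split; first exact: ineireg_beta_in01.
move=> k k_gt0.
have [K XK] := compact_enorm_bounded cX.
have QK v : Q v -> enorm v <= K by case=> Xv _; apply: XK.
have QDomH : Q `<=` DomH by move=> v [/XOm/OmD[]].
split; first exact: Gap_ge_dist QK (lipschitz_enorm_bounded Q_neq0 lipH (ltW LH_gt0) QDomH QK).
apply: Gap_le => // xs Qxs.
exact: (ineireg_dot_le LF_gt0 LH_gt0 mu_gt0 eta_gt0 monF lipF lipH smH cX convX convOm XOm OmD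
  projX projOm lamlo_gt0 lamlo_le lamhi_lt lam_in alpha_ge0 alpha0_le1 alphaS Xx0
  w_def w'_def y_def x_def Qxs k_gt0).
Qed.
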